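(* Consider a duopoly in which sellers have qualities $q_1>q_2$ and each customer is either of BICA type or of greedy type, all customers having a common willingness-to-pay distribution (independent of type) with a monotone hazard rate. If strictly more than half of the customer population is of BICA type, then seller $1$ gradient-dominates seller $2$, and there exists a local Nash equilibrium $\mathbf p^*$ with $p_1^*>p_2^*$.
   Context: Two sellers $1,2$ each sell one item at prices $p_1,p_2\in[0,\bar v]$; a unit mass of customers, each with willingness-to-pay $w_c$ drawn from a common distribution with CDF $F$ and Lipschitz continuous density $f$ on $[0,\bar v]$. A BICA customer considers the sellers with price at most $w_c$ and buys the highest-quality one among them (breaking quality ties by lower price, then arbitrarily). A greedy customer considers the sellers with price at most $w_c$ and buys the cheapest one (breaking price ties by quality, then arbitrarily). Customers with no seller priced at most $w_c$ buy nothing. $R_i(\mathbf p)$ is seller $i$'s expected revenue, $g_i(p_i,p_{-i})=\partial R_i/\partial p_i$. Seller $1$ gradient-dominates seller $2$ if for all $p\in(0,\bar v)$, $g_1(p_1=p,p_2=0)>\lim_{q\uparrow p}g_2(p_1=p,p_2=q)$. Local Nash equilibrium (LNE): $\mathbf p$ such that there exist open neighborhoods $\mathcal U_i\ni p_i$ with $p_i\in\arg\max_{p\in\overline{\mathcal U_i}}R_i(p,p_{-i})$ for $i=1,2$. Monotone hazard rate: $f(p)/(1-F(p))$ non-decreasing. *)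

From Stdlib Require Import Reals Lra.
From Coquelicot Require Import Coquelicot.
Open Scope R_scope.

Inductive seller := Seller1 | Seller2.

(** A BICA customer with willingness-to-pay [w] considers the sellers priced
    at most [w] and buys the highest-quality one; quality ties are broken by
    lower price, then arbitrarily (here: seller 1; this case only arises when
    [q1 = q2]). *)
Definition bica_choice (q1 q2 p1 p2 w : R) : option seller :=
  match Rle_dec p1 w, Rle_dec p2 w with
  | left _, left _ =>
      if Rlt_dec q2 q1 then Some Seller1
      else if Rlt_dec q1 q2 then Some Seller2
      else if Rlt_dec p1 p2 then Some Seller1
      else if Rlt_dec p2 p1 then Some Seller2
      else Some Seller1
  | left _, right _ => Some Seller1
  | right _, left _ => Some Seller2
  | right _, right _ => None
  end.

(** A greedy customer considers the sellers priced at most [w] and buys the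
    cheapest one; price ties are broken by quality, then arbitrarily (here:
    seller 1; only arises when [q1 = q2]). *)
Definition greedy_choice (q1 q2 p1 p2 w : R) : option seller :=
  match Rle_dec p1 w, Rle_dec p2 w with
  | left _, left _ =>
      if Rlt_dec p1 p2 then Some Seller1
      else if Rlt_dec p2 p1 then Some Seller2
      else if Rlt_dec q2 q1 then Some Seller1
      else if Rlt_dec q1 q2 then Some Seller2
      else Some Seller1
  | left _, right _ => Some Seller1
  | right _, left _ => Some Seller2
  | right _, right _ => None
  end.

Definition buys (c : option seller) (i : seller) : R :=
  match c, i with
  | Some Seller1, Seller1 => 1
  | Some Seller2, Seller2 => 1
  | _, _ => 0
  end.

Definition price (p1 p2 : R) (i : seller) : R :=
  match i with Seller1 => p1 | Seller2 => p2 end.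

Definition cdf (f : R -> R) (x : R) : R := RInt f 0 x.

(** Expected revenue of seller [i] at prices [(p1,p2)]: a unit mass of
    customers, a fraction [alpha] of BICA type and [1 - alpha] of greedy type,
    willingness-to-pay with density [f] on [0, vbar] (independent of type). *)
Definition revenue (q1 q2 alpha vbar : R) (f : R -> R) (i : seller)
    (p1 p2 : R) : R :=
  price p1 p2 i *
    (alpha * RInt (fun w => f w * buys (bica_choice q1 q2 p1 p2 w) i) 0 vbar
     + (1 - alpha) *
         RInt (fun w => f w * buys (greedy_choice q1 q2 p1 p2 w) i) 0 vbar).

(** Seller 1 gradient-dominates seller 2:
    for all p in (0, vbar), g_1(p1 = p, p2 = 0) > lim_{q -> p^-} g_2(p1 = p, p2 = q),
    where g_i is the partial derivative of R_i in p_i (the limit is required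
    to exist). [R1], [R2] take the prices in the order (p1, p2). *)
Definition gradient_dominates (R1 R2 : R -> R -> R) (vbar : R) : Prop :=
  forall p, 0 < p < vbar ->
    exists L : R,
      filterlim (fun q => Derive (fun y => R2 p y) q) (at_left p) (locally L)
      /\ Derive (fun x => R1 x 0) p > L.

Definition is_LNE (R1 R2 : R -> R -> R) (vbar p1 p2 : R) : Prop :=
  0 <= p1 <= vbar /\ 0 <= p2 <= vbar /\
  (exists e, 0 < e /\ forall x, 0 <= x <= vbar -> Rabs (x - p1) <= e ->
       R1 x p2 <= R1 p1 p2) /\
  (exists e, 0 < e /\ forall y, 0 <= y <= vbar -> Rabs (y - p2) <= e ->
       R2 p1 y <= R2 p1 p2).

From Stdlib Require Import Reals Lra.
From Coquelicot Require Import Coquelicot.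
Open Scope R_scope.

(* When [p2 < p1], seller 1 serves only the BICA customers with [w >= p1] and earns
   [alpha p1 (1 - F p1)], while seller 2 earns [p2 (alpha (F p1 - F p2) + (1 - alpha) (1 - F p2))];
   when [p1 <= p2] seller 2 sells nothing.
   Differentiating, g_1(p, 0) - lim g_2(p, q^-) = (2 alpha - 1)(1 - F p) + (1 - alpha) p f(p) > 0 for
   [alpha > 1/2].  For the equilibrium take [p1] a maximiser of the monopoly revenue [p (1 - F p)]
   on [[0, vbar]]; it is interior, so [p1 f(p1) >= 1 - F(p1)], which makes seller 2's undercutting
   revenue strictly decreasing at [p1]; its maximiser [p2] on [[0, p1]] is thus [< p1], and seller 1
   is locally optimal at [p1] as long as it stays above [p2]. *)

Lemma lipschitz_continuous (g : R -> R) (K : R) :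
  (forall x y, Rabs (g x - g y) <= K * Rabs (x - y)) -> forall x, continuous g x.
Proof.
  intros Hg x. apply filterlim_locally. intros eps.
  assert (HK : 0 < Rabs K + 1) by (pose proof (Rabs_pos K); lra).
  assert (Hd : 0 < eps / (Rabs K + 1)) by (apply Rdiv_lt_0_compat; [apply cond_pos | lra]).
  exists (mkposreal _ Hd). intros y Hy.
  change (Rabs (y - x) < eps / (Rabs K + 1)) in Hy.
  change (Rabs (g y - g x) < eps).
  assert (Hyx : Rabs (y - x) * (Rabs K + 1) < eps).
  { apply Rmult_lt_reg_r with (/ (Rabs K + 1)); [apply Rinv_0_lt_compat; lra |].
    rewrite Rmult_assoc, Rinv_r by lra. unfold Rdiv in Hy. lra. }
  pose proof (Hg y x). pose proof (Rle_abs K). pose proof (Rabs_pos (y - x)). nra.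
Qed.

Definition clamp (a b x : R) : R := Rmax a (Rmin b x).

Lemma clamp_id a b x : a <= x <= b -> clamp a b x = x.
Proof. intros Hx. unfold clamp, Rmax, Rmin. repeat destruct Rle_dec; lra. Qed.

Lemma clamp_in a b x : a <= b -> a <= clamp a b x <= b.
Proof. intros Hab. unfold clamp, Rmax, Rmin. repeat destruct Rle_dec; lra. Qed.

Lemma clamp_contraction a b x y : Rabs (clamp a b x - clamp a b y) <= Rabs (x - y).
Proof.
  unfold clamp, Rmax, Rmin, Rabs. repeat destruct Rle_dec; repeat destruct Rcase_abs; lra.
Qed.

Lemma lipschitz_on_extension (a b K : R) (g : R -> R) : a <= b ->
  (forall x y, a <= x <= b -> a <= y <= b -> Rabs (g x - g y) <= K * Rabs (x - y)) ->
  exists gc : R -> R, (forall x, continuous gc x) /\ (forall x, a <= x <= b -> g x = gc x).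
Proof.
  intros Hab Hg. exists (fun x => g (clamp a b x)). split.
  - apply (lipschitz_continuous _ (Rabs K)). intros x y.
    pose proof (Hg _ _ (clamp_in a b x Hab) (clamp_in a b y Hab)).
    pose proof (clamp_contraction a b x y). pose proof (Rle_abs K).
    pose proof (Rabs_pos K). pose proof (Rabs_pos (clamp a b x - clamp a b y)). nra.
  - intros x Hx. now rewrite clamp_id.
Qed.

Lemma ex_RInt_continuous_everywhere (g : R -> R) a b :
  (forall x, continuous g x) -> ex_RInt g a b.
Proof. intros Hg. apply (@ex_RInt_continuous R_CompleteNormedModule). intros; apply Hg. Qed.

Lemma is_derive_cdf (g : R -> R) x : (forall x, continuous g x) -> is_derive (cdf g) x (g x).
Proof.
  intros Hg. apply (is_derive_RInt (V := R_NormedModule) g (cdf g) 0 x); [| apply Hg].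
  apply filter_forall. intros y. apply (RInt_correct (V := R_CompleteNormedModule)).
  now apply ex_RInt_continuous_everywhere.
Qed.

Lemma RInt_null (g : R -> R) a b : a <= b -> (forall w, a < w < b -> g w = 0) ->
  ex_RInt g a b /\ RInt g a b = 0.
Proof.
  intros Hab Hg.
  assert (E : forall x, Rmin a b < x < Rmax a b -> 0 = g x).
  { intros x Hx. rewrite Rmin_left, Rmax_right in Hx by lra. symmetry; apply Hg; lra. }
  split.
  - apply (ex_RInt_ext _ _ _ _ E), ex_RInt_const.
  - rewrite <- (RInt_ext _ _ _ _ E), RInt_const. apply Rmult_0_r.
Qed.

Lemma RInt_density_indicator (f fc ind : R -> R) vbar a b :
  (forall x, continuous fc x) -> (forall x, 0 <= x <= vbar -> f x = fc x) ->
  0 <= a <= b -> b <= vbar ->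
  (forall w, 0 < w < vbar -> (a < w < b -> ind w = 1) /\ (w < a \/ b < w -> ind w = 0)) ->
  RInt (fun w => f w * ind w) 0 vbar = cdf fc b - cdf fc a.
Proof.
  intros Hc Hf Ha Hb Hind. set (g := fun w => fc w * ind w).
  rewrite (RInt_ext _ g).
  2:{ intros x Hx. rewrite Rmin_left, Rmax_right in Hx by lra. unfold g. rewrite Hf by lra. reflexivity. }
  destruct (RInt_null g 0 a) as [E0a I0a]; [lra | |].
  { intros w Hw. unfold g. rewrite (proj2 (Hind w ltac:(lra))) by lra. apply Rmult_0_r. }
  destruct (RInt_null g b vbar) as [Ebv Ibv]; [lra | |].
  { intros w Hw. unfold g. rewrite (proj2 (Hind w ltac:(lra))) by lra. apply Rmult_0_r. }
  assert (Eab : forall x, Rmin a b < x < Rmax a b -> fc x = g x).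
  { intros x Hx. rewrite Rmin_left, Rmax_right in Hx by lra.
    unfold g. rewrite (proj1 (Hind x ltac:(lra))) by lra. ring. }
  assert (Hab : ex_RInt g a b) by (apply (ex_RInt_ext _ _ _ _ Eab), ex_RInt_continuous_everywhere, Hc).
  unfold cdf. rewrite <- (RInt_Chasles fc 0 a b) by now apply ex_RInt_continuous_everywhere.
  rewrite (RInt_ext _ _ _ _ Eab).
  rewrite <- (RInt_Chasles g 0 a vbar), <- (RInt_Chasles g a b vbar); auto.
  - unfold plus; simpl. lra.
  - now apply (ex_RInt_Chasles _ _ b).
Qed.

Lemma increasing_near_pos_derive (g g' : R -> R) x0 :
  (forall x, is_derive g x (g' x)) -> continuous g' x0 -> 0 < g' x0 ->
  exists d, 0 < d /\ forall x y, x0 - d < x -> x < y -> y < x0 + d -> g x < g y.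
Proof.
  intros Hd Hc Hpos.
  assert (Hnear : locally x0 (fun y => 0 < g' y)).
  { apply Hc. apply (locally_interval _ _ 0 p_infty); simpl; auto. }
  destruct Hnear as [d Hnear]. exists d. split; [apply cond_pos |].
  intros x y Hx Hxy Hy.
  apply (incr_function g (x0 - d) (x0 + d) g'); simpl; try lra.
  - intros z _ _. apply Hd.
  - intros z Hz1 Hz2. apply Hnear. change (Rabs (z - x0) < d). apply Rabs_def1; lra.
Qed.

Lemma derive_le0_of_max_right (g g' : R -> R) c b :
  (forall x, is_derive g x (g' x)) -> continuous g' c -> c < b ->
  (forall x, c <= x <= b -> g x <= g c) -> g' c <= 0.
Proof.
  intros Hd Hc Hcb Hmax. apply Rnot_lt_le. intros Hpos.
  destruct (increasing_near_pos_derive g g' c Hd Hc Hpos) as [d [Hd0 Hincr]].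
  set (y := Rmin b (c + d / 2)).
  assert (Hy : c < y < c + d) by (unfold y, Rmin; destruct Rle_dec; lra).
  pose proof (Hincr c y ltac:(lra) ltac:(lra) ltac:(lra)).
  assert (Hyb : y <= b) by apply Rmin_l.
  pose proof (Hmax y ltac:(lra)). lra.
Qed.

Lemma derive_ge0_of_max_left (g g' : R -> R) a c :
  (forall x, is_derive g x (g' x)) -> continuous g' c -> a < c ->
  (forall x, a <= x <= c -> g x <= g c) -> 0 <= g' c.
Proof.
  intros Hd Hc Hac Hmax. apply Rnot_lt_le. intros Hneg.
  destruct (increasing_near_pos_derive (fun x => - g x) (fun x => - g' x) c) as [d [Hd0 Hincr]].
  - intros x. apply (is_derive_opp g), Hd.
  - apply (continuous_opp g'), Hc.
  - lra.
  - set (y := Rmax a (c - d / 2)).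
    assert (Hy : c - d < y < c) by (unfold y, Rmax; destruct Rle_dec; lra).
    pose proof (Hincr y c ltac:(lra) ltac:(lra) ltac:(lra)).
    assert (Hya : a <= y) by apply Rmax_l.
    pose proof (Hmax y ltac:(lra)). lra.
Qed.

Definition monopoly_revenue (F : R -> R) (p : R) : R := p * (1 - F p).

Definition undercut_revenue (alpha : R) (F : R -> R) (p1 p : R) : R :=
  p * (alpha * (F p1 - F p) + (1 - alpha) * (1 - F p)).

Section PricingProblems.

Variables (F f : R -> R).
Hypothesis F_deriv : forall x, is_derive F x (f x).
Hypothesis f_cont : forall x, continuous f x.

Lemma continuous_F x : continuous F x.
Proof. apply (ex_derive_continuous (V := R_NormedModule)). exists (f x). apply F_deriv. Qed.

Lemma is_derive_monopoly_revenue p :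
  is_derive (monopoly_revenue F) p (1 - F p - p * f p).
Proof.
  unfold monopoly_revenue. auto_derive.
  - exists (f p). apply F_deriv.
  - replace (Derive (fun x => F x) p) with (f p) by (symmetry; apply is_derive_unique, F_deriv). ring.
Qed.

Lemma is_derive_undercut_revenue alpha p1 p :
  is_derive (undercut_revenue alpha F p1) p
    (alpha * (F p1 - F p) + (1 - alpha) * (1 - F p) - p * f p).
Proof.
  unfold undercut_revenue. auto_derive.
  - split; [exists (f p); apply F_deriv | split; [exists (f p); apply F_deriv | exact I]].
  - replace (Derive (fun x => F x) p) with (f p) by (symmetry; apply is_derive_unique, F_deriv). ring.
Qed.

Lemma continuous_monopoly_revenue_derive p :
  continuous (fun x => 1 - F x - x * f x) p.
Proof.
  apply (continuous_minus (fun x => 1 - F x)).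
  - apply (continuous_minus (fun _ => 1)); [apply continuous_const | apply continuous_F].
  - apply (continuous_mult (K := R_AbsRing) (fun x => x) f); [apply continuous_id | apply f_cont].
Qed.

Lemma continuous_undercut_revenue_derive alpha p1 p :
  continuous (fun x => alpha * (F p1 - F x) + (1 - alpha) * (1 - F x) - x * f x) p.
Proof.
  apply (continuous_minus (fun x => alpha * (F p1 - F x) + (1 - alpha) * (1 - F x))).
  - apply (continuous_plus (fun x => alpha * (F p1 - F x))).
    + apply (continuous_mult (K := R_AbsRing) (fun _ => alpha)); [apply continuous_const |].
      apply (continuous_minus (fun _ => F p1)); [apply continuous_const | apply continuous_F].
    + apply (continuous_mult (K := R_AbsRing) (fun _ => 1 - alpha)); [apply continuous_const |].
      apply (continuous_minus (fun _ => 1)); [apply continuous_const | apply continuous_F].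
  - apply (continuous_mult (K := R_AbsRing) (fun x => x) f); [apply continuous_id | apply f_cont].
Qed.

Lemma exists_monopoly_price vbar : 0 < vbar -> F vbar = 1 -> F (vbar / 2) < 1 ->
  exists p1, 0 < p1 < vbar /\ 1 - F p1 <= p1 * f p1 /\
    forall x, 0 <= x <= vbar -> monopoly_revenue F x <= monopoly_revenue F p1.
Proof.
  intros Hv HFv HFhalf.
  destruct (continuous_ab_maj_consistent (monopoly_revenue F) 0 vbar) as [p1 [Hmax Hp1]]; [lra | |].
  { intros x _. apply (ex_derive_continuous (V := R_NormedModule)).
    eexists. apply is_derive_monopoly_revenue. }
  assert (Hhalf : 0 < monopoly_revenue F (vbar / 2)).
  { unfold monopoly_revenue. apply Rmult_lt_0_compat; lra. }
  pose proof (Hmax (vbar / 2) ltac:(lra)) as Hle.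
  assert (Hp1int : 0 < p1 < vbar).
  { unfold monopoly_revenue in Hle, Hhalf. split; apply Rnot_le_lt; intros Hc.
    - replace p1 with 0 in Hle by lra. lra.
    - replace p1 with vbar in Hle by lra. rewrite HFv in Hle. lra. }
  exists p1. split; [exact Hp1int | split; [| exact Hmax]].
  enough (1 - F p1 - p1 * f p1 <= 0) by lra.
  apply (derive_le0_of_max_right (monopoly_revenue F) (fun x => 1 - F x - x * f x) p1 vbar).
  - apply is_derive_monopoly_revenue.
  - apply continuous_monopoly_revenue_derive.
  - lra.
  - intros x Hx. apply Hmax. lra.
Qed.

(* By the first-order condition at [p1], the slope of the undercutting revenue at [p1] is
   at most [- alpha (1 - F p1) < 0], so its maximum on [[0, p1]] is not attained at [p1]. *)
Lemma exists_undercut_price alpha p1 : 0 < alpha -> 0 < p1 -> F p1 < 1 ->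
  1 - F p1 <= p1 * f p1 ->
  exists p2, 0 <= p2 < p1 /\
    forall y, 0 <= y <= p1 -> undercut_revenue alpha F p1 y <= undercut_revenue alpha F p1 p2.
Proof.
  intros Ha Hp1 HF1 Hfoc.
  destruct (continuous_ab_maj_consistent (undercut_revenue alpha F p1) 0 p1) as [p2 [Hmax Hp2]]; [lra | |].
  { intros x _. apply (ex_derive_continuous (V := R_NormedModule)).
    eexists. apply is_derive_undercut_revenue. }
  exists p2. split; [| exact Hmax]. split; [lra |].
  destruct (Rle_lt_or_eq_dec p2 p1) as [Hlt | Heq]; [lra | exact Hlt |].
  subst p2. exfalso.
  assert (Hslope : 0 <= alpha * (F p1 - F p1) + (1 - alpha) * (1 - F p1) - p1 * f p1).
  { apply (derive_ge0_of_max_left (undercut_revenue alpha F p1)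
      (fun x => alpha * (F p1 - F x) + (1 - alpha) * (1 - F x) - x * f x) 0 p1); auto.
    - apply is_derive_undercut_revenue.
    - apply continuous_undercut_revenue_derive. }
  nra.
Qed.

End PricingProblems.

Section Duopoly.

Variables (vbar q1 q2 alpha : R) (f fc : R -> R).
Hypothesis vbar_pos : 0 < vbar.
Hypothesis q2_lt_q1 : q2 < q1.
Hypothesis alpha_range : 1 / 2 < alpha <= 1.
Hypothesis fc_cont : forall x, continuous fc x.
Hypothesis f_fc : forall x, 0 <= x <= vbar -> f x = fc x.
Hypothesis fc_nonneg : forall x, 0 <= x <= vbar -> 0 <= fc x.
Hypothesis cdf_vbar : cdf fc vbar = 1.
Hypothesis cdf_lt_1 : forall p, 0 <= p < vbar -> cdf fc p < 1.

Local Notation R1 := (revenue q1 q2 alpha vbar f Seller1).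
Local Notation R2 := (revenue q1 q2 alpha vbar f Seller2).

Local Ltac solve_indicator :=
  intros w Hw; unfold bica_choice, greedy_choice;
  repeat match goal with
  | |- context [Rle_dec ?a ?b] => destruct (Rle_dec a b)
  | |- context [Rlt_dec ?a ?b] => destruct (Rlt_dec a b)
  end; simpl; split; intros; lra.

Lemma revenue1_undercut p1 p2 : 0 <= p2 < p1 -> p1 <= vbar ->
  R1 p1 p2 = alpha * monopoly_revenue (cdf fc) p1.
Proof.
  intros Hp Hp1. unfold revenue, price, monopoly_revenue.
  rewrite (RInt_density_indicator f fc _ vbar p1 vbar) by (auto; lra || solve_indicator).
  rewrite (RInt_density_indicator f fc _ vbar 0 0) by (auto; lra || solve_indicator).
  rewrite cdf_vbar. ring.
Qed.

Lemma revenue2_undercut p1 p2 : 0 <= p2 < p1 -> p1 <= vbar ->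
  R2 p1 p2 = undercut_revenue alpha (cdf fc) p1 p2.
Proof.
  intros Hp Hp1. unfold revenue, price, undercut_revenue.
  rewrite (RInt_density_indicator f fc _ vbar p2 p1) by (auto; lra || solve_indicator).
  rewrite (RInt_density_indicator f fc _ vbar p2 vbar) by (auto; lra || solve_indicator).
  rewrite cdf_vbar. ring.
Qed.

Lemma revenue2_not_cheaper p1 p2 : 0 <= p1 <= p2 -> R2 p1 p2 = 0.
Proof.
  intros Hp. unfold revenue, price.
  rewrite 2!(RInt_density_indicator f fc _ vbar 0 0) by (auto; lra || solve_indicator).
  ring.
Qed.

Lemma gradient_dominance : gradient_dominates R1 R2 vbar.
Proof.
  intros p Hp.
  set (F := cdf fc).
  assert (HF : forall x, is_derive F x (fc x)) by (intros x; apply is_derive_cdf, fc_cont).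
  set (g2 := fun x => alpha * (F p - F x) + (1 - alpha) * (1 - F x) - x * fc x).
  exists (g2 p). split.
  - apply (filterlim_ext_loc g2).
    + exists (mkposreal p (proj1 Hp)). intros q Hq Hqp.
      change (Rabs (q - p) < p) in Hq. apply Rabs_def2 in Hq.
      rewrite (Derive_ext_loc _ (undercut_revenue alpha F p)).
      * symmetry. apply is_derive_unique, is_derive_undercut_revenue, HF.
      * apply (locally_interval _ q 0 p); simpl; try lra.
        intros y Hy0 Hyp. apply revenue2_undercut; lra.
    + apply (filterlim_filter_le_1 _ (filter_le_within (F := locally p) _)).
      change (continuous g2 p).
      apply continuous_undercut_revenue_derive; auto.
  - rewrite (Derive_ext_loc _ (fun x => alpha * monopoly_revenue F x)).
    2:{ apply (locally_interval _ p 0 vbar); simpl; try lra.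
        intros y Hy0 Hyv. apply revenue1_undercut; lra. }
    rewrite (is_derive_unique _ _ (alpha * (1 - F p - p * fc p))).
    2:{ apply (is_derive_scal (monopoly_revenue F)), is_derive_monopoly_revenue, HF. }
    assert (HFp : F p < 1) by (apply cdf_lt_1; lra).
    pose proof (fc_nonneg p ltac:(lra)).
    assert (0 < (2 * alpha - 1) * (1 - F p)) by (apply Rmult_lt_0_compat; lra).
    assert (0 <= (1 - alpha) * (p * fc p)) by (apply Rmult_le_pos; [| apply Rmult_le_pos]; lra).
    unfold g2. nra.
Qed.

Lemma exists_LNE_leader_above : exists p1 p2, is_LNE R1 R2 vbar p1 p2 /\ p2 < p1.
Proof.
  set (F := cdf fc).
  assert (HF : forall x, is_derive F x (fc x)) by (intros x; apply is_derive_cdf, fc_cont).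
  destruct (exists_monopoly_price F fc HF fc_cont vbar) as [p1 [Hp1 [Hfoc Hmax1]]]; auto.
  { apply cdf_lt_1. lra. }
  destruct (exists_undercut_price F fc HF fc_cont alpha p1) as [p2 [Hp2 Hmax2]]; auto; try lra.
  { apply cdf_lt_1. lra. }
  exists p1, p2. split; [| lra].
  split; [lra |]. split; [lra |]. split.
  - exists ((p1 - p2) / 2). split; [lra |]. intros x Hx Hxp1.
    assert (p2 < x) by (unfold Rabs in Hxp1; destruct Rcase_abs; lra).
    rewrite (revenue1_undercut x p2), (revenue1_undercut p1 p2) by lra.
    apply Rmult_le_compat_l; [lra | apply Hmax1; lra].
  - exists 1. split; [lra |]. intros y Hy _.
    rewrite (revenue2_undercut p1 p2) by lra.
    destruct (Rlt_dec y p1) as [Hlt | Hge].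
    + rewrite (revenue2_undercut p1 y) by lra. apply Hmax2. lra.
    + rewrite revenue2_not_cheaper by lra.
      apply Rle_trans with (undercut_revenue alpha F p1 p1); [| apply Hmax2; lra].
      assert (HFp1 : F p1 < 1) by (apply cdf_lt_1; lra).
      unfold undercut_revenue. apply Rmult_le_pos; [lra |].
      replace (F p1 - F p1) with 0 by ring. nra.
Qed.

End Duopoly.

Lemma cdf_ext_on (f g : R -> R) vbar x : 0 <= x <= vbar ->
  (forall y, 0 <= y <= vbar -> f y = g y) -> cdf f x = cdf g x.
Proof.
  intros Hx Hfg. apply RInt_ext. intros y Hy.
  rewrite Rmin_left, Rmax_right in Hy by lra. apply Hfg. lra.
Qed.

Theorem corollary4p2 (vbar q1 q2 alpha : R) (f : R -> R) :
  0 < vbar ->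
  q2 < q1 ->
  1 / 2 < alpha <= 1 ->
  (forall x, 0 <= x <= vbar -> 0 <= f x) ->
  RInt f 0 vbar = 1 ->
  (exists K, forall x y, 0 <= x <= vbar -> 0 <= y <= vbar ->
     Rabs (f x - f y) <= K * Rabs (x - y)) ->
  (forall p, 0 <= p < vbar -> cdf f p < 1) ->
  (forall x y, 0 <= x <= y -> y < vbar ->
     f x / (1 - cdf f x) <= f y / (1 - cdf f y)) ->
  gradient_dominates (revenue q1 q2 alpha vbar f Seller1)
                     (revenue q1 q2 alpha vbar f Seller2) vbar /\
  exists p1 p2,
    is_LNE (revenue q1 q2 alpha vbar f Seller1)
           (revenue q1 q2 alpha vbar f Seller2) vbar p1 p2 /\ p2 < p1.
Proof.
  intros Hv Hq Ha Hf_nonneg Hf_mass [K HK] Hcdf _.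
  destruct (lipschitz_on_extension 0 vbar K f) as [fc [Hfc_cont Hf_fc]]; [lra | exact HK |].
  assert (Hcdf_fc : forall x, 0 <= x <= vbar -> cdf f x = cdf fc x)
    by (intros x Hx; now apply (cdf_ext_on _ _ vbar)).
  assert (Hfc_nonneg : forall x, 0 <= x <= vbar -> 0 <= fc x)
    by (intros x Hx; rewrite <- Hf_fc by exact Hx; auto).
  assert (Hfc_mass : cdf fc vbar = 1) by (rewrite <- Hcdf_fc; [exact Hf_mass | lra]).
  assert (Hfc_lt_1 : forall p, 0 <= p < vbar -> cdf fc p < 1)
    by (intros p Hp; rewrite <- Hcdf_fc by lra; auto).
  split.
  - eapply gradient_dominance; eauto.
  - eapply exists_LNE_leader_above; eauto.
Qed.
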